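(* When $\operatorname{char}(\Bbbk) = 0$, the linear map $ \textbf{W} \to \Bbbk$ with $[w,n]\mapsto \frac{1}{\ell(w)!}$ for $[w,n] \in \mathbb{W}$ is an algebra morphism.
   Context: Let $\Bbbk$ be a field. A word is a finite sequence of positive integers; $\ell(w)$ is its length. Let $\textsf{Shuffle}$ be the $\Bbbk$-vector space with basis all words. For a word $w=w_1\cdots w_m$ with $\max(w)\le n\in\mathbb{N}$, let $[w,n]$ be the linear endomorphism of $\textsf{Shuffle}$ sending a word $v$ of length $n$ to $v_{w_1}\cdots v_{w_m}$ and all other words to $0$; $\mathbb{W}$ is the set of all such $[w,n]$ and $\textbf{W}$ their span (they form a basis). $\textbf{W}$ is an algebra with product $\nabla_{\sqcup\!\sqcup}([v,m]\otimes[w,n]) = [v\sqcup\!\sqcup (w\uparrow m), m+n]$, where $\sqcup\!\sqcup$ is the shuffle product of words and $w\uparrow m$ adds $m$ to each letter of $w$, and unit $[\emptyset,0]$. *)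

(* The algebra W is modelled as the free F-module
   {malg F[Wbasis]} (finitely supported functions Wbasis -> F, from
   multinomials' monalg) on the basis W = { [w,n] }. *)
From HB Require Import structures.
From mathcomp Require Import all_boot all_order all_algebra.
From mathcomp Require Import finmap.
From mathcomp Require Import monalg.

Set Implicit Arguments.
Unset Strict Implicit.
Unset Printing Implicit Defensive.

Import GRing.Theory.
Local Open Scope ring_scope.

Definition is_Wbasis (p : seq nat * nat) : bool :=
  all (fun a => (0 < a) && (a <= p.2))%N p.1.

Definition Wbasis := {p : seq nat * nat | is_Wbasis p}.

Definition Wword (b : Wbasis) : seq nat := (val b).1.
Definition Wn (b : Wbasis) : nat := (val b).2.

(* Shuffle product of words, as the list (multiset) of all interleavings,
   counted with multiplicity. *)
Fixpoint shuffle (u v : seq nat) {struct u} : seq (seq nat) :=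
  match u with
  | [::] => [:: v]
  | a :: u' =>
      let fix sh (v : seq nat) : seq (seq nat) :=
        match v with
        | [::] => [:: u]
        | b :: v' => [seq a :: w | w <- shuffle u' v] ++ [seq b :: w | w <- sh v']
        end
      in sh v
  end.

Definition shiftw (w : seq nat) (m : nat) : seq nat := [seq (a + m)%N | a <- w].

Section WAlg.
Variable F : fieldType.

Definition WT := {malg F[Wbasis]}.

(* The basis vector [w,n] (0 if the pair is not a valid basis index; this
   never happens below). *)
Definition Wbase (p : seq nat * nat) : WT :=
  if insub p is Some b then << (b : Wbasis) >> else 0.

Definition Wone : WT := Wbase ([::], 0%N).

Definition Wmul_basis (b1 b2 : Wbasis) : WT :=
  \sum_(s <- shuffle (Wword b1) (shiftw (Wword b2) (Wn b1)))
     Wbase (s, (Wn b1 + Wn b2)%N).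

Definition Wmul (x y : WT) : WT :=
  \sum_(b1 <- msupp x) \sum_(b2 <- msupp y)
     ((x@_b1 * y@_b2) *: Wmul_basis b1 b2).

Definition phi (x : WT) : F :=
  \sum_(b <- msupp x) x@_b / ((size (Wword b))`!)%:R.

End WAlg.

(** The product [v,m] * [w,n] is a sum over the C(p+q, p) shuffles of two
    words of lengths p = l(v) and q = l(w), each a basis element whose word
    has length p + q.  Hence phi sends it to C(p+q, p) / (p+q)!, which in
    characteristic 0 equals 1/p! * 1/q!; bilinearity does the rest. *)

From HB Require Import structures.
From mathcomp Require Import all_boot all_order all_algebra.
From mathcomp Require Import finmap.
From mathcomp Require Import monalg.

Set Implicit Arguments.
Unset Strict Implicit.
Unset Printing Implicit Defensive.

Import GRing.Theory.
Local Open Scope ring_scope.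

Lemma shuffle_cons (a b : nat) (u v : seq nat) :
  shuffle (a :: u) (b :: v) =
  [seq a :: w | w <- shuffle u (b :: v)] ++ [seq b :: w | w <- shuffle (a :: u) v].
Proof. by []. Qed.

Lemma perm_shuffle (u v s : seq nat) : s \in shuffle u v -> perm_eq s (u ++ v).
Proof.
elim: u v s => [|a u IHu] v s; first by rewrite inE => /eqP ->.
elim: v s => [|b v IHv] s; first by rewrite inE => /eqP ->; rewrite cats0.
rewrite shuffle_cons mem_cat => /orP[] /mapP[w w_sh ->].
  by rewrite /= perm_cons IHu.
rewrite -(cat1s b v) perm_sym perm_catCA /= perm_cons perm_sym.
exact: IHv.
Qed.

Lemma size_shuffle (u v : seq nat) :
  size (shuffle u v) = 'C(size u + size v, size u).
Proof.
elim: u v => [|a u IHu] v; first by rewrite bin0.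
elim: v => [|b v IHv]; first by rewrite addn0 binn.
rewrite shuffle_cons size_cat !size_map IHu IHv /=.
by rewrite !addSn !addnS (binS (size u + size v).+1) addnC.
Qed.

Lemma natr_bin_div_fact (F : fieldType) (m n : nat) : [pchar F] =i pred0 ->
  'C(m + n, m)%:R / ((m + n)`!)%:R = (m`!)%:R^-1 * (n`!)%:R^-1 :> F.
Proof.
move=> char0; have bin_neq0 : 'C(m + n, m)%:R != 0 :> F.
  by rewrite (pcharf0P F).1 // -lt0n bin_gt0 leq_addr.
have := bin_fact (leq_addr n m); rewrite addKn => <-.
by rewrite !natrM !invfM mulVKf.
Qed.

Lemma is_Wbasis_shuffle (b1 b2 : Wbasis) (s : seq nat) :
  s \in shuffle (Wword b1) (shiftw (Wword b2) (Wn b1)) ->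
  is_Wbasis (s, (Wn b1 + Wn b2)%N).
Proof.
rewrite /is_Wbasis /= => /perm_shuffle/perm_all ->.
rewrite all_cat all_map; apply/andP; split.
  by apply: sub_all (valP b1) => a /andP[-> /leq_trans->] //; rewrite leq_addr.
apply: sub_all (valP b2) => a /andP[a_gt0 a_le] /=.
by rewrite addn_gt0 a_gt0 addnC leq_add2l.
Qed.

Section PhiMorphism.
Variable F : fieldType.

Definition inv_fact_length (b : Wbasis) : F := ((size (Wword b))`!)%:R^-1.

Lemma phiE : @phi F =1 mmap idfun inv_fact_length.
Proof. by []. Qed.

Lemma phi_sum (I : Type) (r : seq I) (G : I -> WT F) :
  phi (\sum_(i <- r) G i) = \sum_(i <- r) phi (G i).
Proof. by rewrite phiE raddf_sum. Qed.

Lemma phiZ (c : F) (x : WT F) : phi (c *: x) = c * phi x.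
Proof.
rewrite !phiE (mmapEw (msuppZ_le c x)) mmapE big_distrr /=.
by apply: eq_bigr => b _; rewrite mcoeffZ mulrA.
Qed.

Lemma phi_Wbase (s : seq nat) (n : nat) : is_Wbasis (s, n) ->
  phi (Wbase F (s, n)) = ((size s)`!)%:R^-1.
Proof. by move=> s_n; rewrite /Wbase insubT phiE mmapU mul1r. Qed.

Hypothesis char0 : [pchar F] =i pred0.

Lemma phi_Wmul_basis (b1 b2 : Wbasis) :
  phi (Wmul_basis F b1 b2) = inv_fact_length b1 * inv_fact_length b2.
Proof.
rewrite /Wmul_basis phi_sum.
rewrite (eq_big_seq (fun=> ((size (Wword b1) + size (Wword b2))`!)%:R^-1)).
  rewrite big_const_seq count_predT iter_addr_0 size_shuffle size_map.
  by rewrite -(mulr_natl _ 'C(_, _)) natr_bin_div_fact.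
move=> s s_sh; rewrite phi_Wbase ?(is_Wbasis_shuffle s_sh) //.
by rewrite (perm_size (perm_shuffle s_sh)) size_cat size_map.
Qed.

End PhiMorphism.

Theorem corollary3p6 (F : fieldType) (char0 : [pchar F] =i pred0) :
  phi (Wone F) = 1 /\
  (forall x y : WT F, phi (Wmul x y) = phi x * phi y).
Proof.
split; first by rewrite phi_Wbase // invr1.
move=> x y; rewrite /Wmul phi_sum [phi x]phiE [phi y]phiE !mmapE big_distrl /=.
apply: eq_bigr => b1 _; rewrite phi_sum big_distrr /=.
apply: eq_bigr => b2 _; rewrite phiZ phi_Wmul_basis //.
by rewrite mulrACA.
Qed.
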